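(* There is no matching algorithm that is both incentive compatible with rationality (IC-R) and $\alpha$-optimal for some $\alpha>0$, even when the number of features is $|F|=2$.
   Context: An instance consists of: a set $N$ of students; a set $M$ of colleges, each college $c$ with positive integer capacity $x_c$ and strict preference $\succ_c$ over $N$; a finite set $F$ of features; for each student $s$ and feature $f$ a utility function $u_s^f:M\to[0,1]$; for each student $s$ a probability distribution $\mu_s$ over weight vectors $w_s=(w_s^f)_{f\in F}$ with $w_s^f\ge0$, $\sum_f w_s^f=1$, independent across students. Every college is acceptable to every student and vice versa. For realized $w_s$, $c\succeq_s^{w_s}c'$ iff $\sum_f w_s^fu_s^f(c)\ge\sum_f w_s^fu_s^f(c')$, strict version $\succ_s^{w_s}$; $\mathsf{null}$ (unmatched) is ranked below any college. A matching $\pi$ gives each student at most one college and each college $c$ a set $\pi(c)$ of at most $x_c$ students. Given realized weights, $\pi$ is (weakly) stable if there is no pair $(s,c)$ with $c\succ_s^{w_s}\pi(s)$ and either $|\pi(c)|<x_c$ or some $s'\in\pi(c)$ with $s\succ_c s'$. $\mathsf{ProS}(\pi;\mathcal I)$ is the probability over independent $w_s\sim\mu_s$ that $\pi$ is stable. A matching algorithm $\mathsf{Alg}$ is $\alpha$-optimal if $\inf_{\mathcal I}\mathsf{ProS}(\mathsf{Alg}(\mathcal I);\mathcal I)/\max_\pi\mathsf{ProS}(\pi;\mathcal I)\ge\alpha$. Each student $s$ may misreport $(u_s',\mu_s')$ in place of her true $(\{u_s^f\},\mu_s)$; let $\pi(s)$, $\pi'(s)$ be her assignments under truthful report and misreport.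 The algorithm is IC-R if $\Pr[\pi'(s)\succ_s^{w_s}\pi(s)]>1/2$ never occurs (probability over her true $w_s\sim\mu_s$, with true utilities), for any instance, student and misreport. *)

From HB Require Import structures.
From mathcomp Require Import all_boot all_order all_algebra.
From mathcomp Require Import fingroup perm reals.
Set Implicit Arguments. Unset Strict Implicit. Unset Printing Implicit Defensive.
Import Order.TTheory GRing.Theory Num.Theory.
Local Open Scope ring_scope.

Definition weight_ok (R : realType) (F : finType) (w : {ffun F -> R}) : bool :=
  [forall f, 0 <= w f] && (\sum_f w f == 1).

(* a probability distribution over weight vectors, given by its atoms
   (probability, weight vector) *)
Definition dist (R : realType) (F : finType) := seq (R * {ffun F -> R}).

Definition dist_ok (R : realType) (F : finType) (d : dist R F) : bool :=
  all (fun a => (0 <= a.1) && weight_ok a.2) d && (\sum_(a <- d) a.1 == 1).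

Definition prob_w (R : realType) (F : finType) (d : dist R F)
  (P : {ffun F -> R} -> bool) : R :=
  \sum_(a <- d) a.1 * (P a.2)%:R.

(* students 'I_n, colleges 'I_m, features F.
   crank c s = rank of student s in the strict preference of college c
   (smaller rank = more preferred). *)
Record instance (R : realType) (n m : nat) (F : finType) := Instance {
  cap : 'I_m -> nat;
  crank : 'I_m -> {perm 'I_n};
  util : 'I_n -> F -> 'I_m -> R;
  mu : 'I_n -> dist R F }.

Definition valid_inst (R : realType) (n m : nat) (F : finType)
  (I : instance R n m F) : Prop :=
  [/\ forall c, (0 < cap I c)%N,
      forall s f c, 0 <= util I s f c <= 1
    & forall s, dist_ok (mu I s)].

Definition cpref (R : realType) (n m : nat) (F : finType)
  (I : instance R n m F) (c : 'I_m) (s s' : 'I_n) : bool :=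
  (crank I c s < crank I c s')%N.

Definition score (R : realType) (n m : nat) (F : finType)
  (I : instance R n m F) (s : 'I_n) (w : {ffun F -> R}) (c : 'I_m) : R :=
  \sum_f w f * util I s f c.

(* strict preference of student s (under weights w) over colleges and null
   (None = unmatched, ranked below every college) *)
Definition spref (R : realType) (n m : nat) (F : finType)
  (I : instance R n m F) (s : 'I_n) (w : {ffun F -> R})
  (o o' : option 'I_m) : bool :=
  match o, o' with
  | Some c, None => true
  | Some c, Some c' => score I s w c' < score I s w c
  | None, _ => false
  end.

Definition matching (n m : nat) := {ffun 'I_n -> option 'I_m}.

Definition load (n m : nat) (pi : matching n m) (c : 'I_m) : nat :=
  #|[set s | pi s == Some c]|.

Definition is_matching (R : realType) (n m : nat) (F : finType)
  (I : instance R n m F) (pi : matching n m) : bool :=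
  [forall c, (load pi c <= cap I c)%N].

Definition blocking (R : realType) (n m : nat) (F : finType)
  (I : instance R n m F) (pi : matching n m) (w : 'I_n -> {ffun F -> R})
  (s : 'I_n) (c : 'I_m) : bool :=
  spref I s (w s) (Some c) (pi s) &&
  ((load pi c < cap I c)%N || [exists s', (pi s' == Some c) && cpref I c s s']).

Definition stable (R : realType) (n m : nat) (F : finType)
  (I : instance R n m F) (pi : matching n m) (w : 'I_n -> {ffun F -> R}) : bool :=
  [forall s, forall c, ~~ blocking I pi w s c].

(* a joint outcome picks one atom of mu_s for every student s *)
Definition profile (R : realType) (n m : nat) (F : finType) (I : instance R n m F) :=
  {dffun forall s : 'I_n, 'I_(size (mu I s))}.

Definition atom (R : realType) (n m : nat) (F : finType) (I : instance R n m F)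
  (s : 'I_n) (i : nat) : R * {ffun F -> R} :=
  nth (0, [ffun=> 0]) (mu I s) i.

Definition ProS (R : realType) (n m : nat) (F : finType)
  (I : instance R n m F) (pi : matching n m) : R :=
  \sum_(p : profile I)
     (\prod_(s : 'I_n) (atom I s (p s)).1) *
     (stable I pi (fun s => (atom I s (p s)).2))%:R.

Definition MaxProS (R : realType) (n m : nat) (F : finType)
  (I : instance R n m F) : R :=
  \big[Num.max/0]_(pi : matching n m | is_matching I pi) ProS I pi.

Definition algorithm (R : realType) :=
  forall n m : nat, instance R n m 'I_2 -> matching n m.

Definition outputs_matchings (R : realType) (Alg : algorithm R) : Prop :=
  forall n m (I : instance R n m 'I_2), valid_inst I -> is_matching I (Alg n m I).

(* inf_I ProS(Alg I) / max_pi ProS(pi) >= alpha, written without division *)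
Definition alpha_optimal (R : realType) (Alg : algorithm R) (alpha : R) : Prop :=
  forall n m (I : instance R n m 'I_2), valid_inst I ->
    alpha * MaxProS I <= ProS I (Alg n m I).

Definition misreport (R : realType) (n m : nat) (F : finType)
  (I : instance R n m F) (s : 'I_n) (u' : F -> 'I_m -> R) (d' : dist R F) :
  instance R n m F :=
  Instance (cap I) (crank I)
    (fun t => if t == s then u' else util I t)
    (fun t => if t == s then d' else mu I t).

Definition IC_R (R : realType) (Alg : algorithm R) : Prop :=
  forall n m (I : instance R n m 'I_2) (s : 'I_n)
    (u' : 'I_2 -> 'I_m -> R) (d' : dist R 'I_2),
    valid_inst I -> valid_inst (misreport I s u' d') ->
    ~ (1 / 2 < prob_w (mu I s)
         (fun w => spref I s w (Alg n m (misreport I s u' d') s) (Alg n m I s))).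

(* One student, three colleges X, Y, Z of capacity 1, two features.  The true
   utilities are X = (1, 0), Y = (3/4, 3/4), Z = (0, 1), and the weight vector
   is (1, 0), (1/2, 1/2) or (0, 1) with probabilities 1/2 - e, 2e, 1/2 - e, so
   the favourite college is X, Y or Z respectively.  A lone student's matching
   is stable exactly when she gets her favourite, hence ProS is 1/2 - e for X
   and Z but only 2e for Y, and for small e an alpha-optimal algorithm must
   assign X or Z.  If she instead reports a utility putting Y first under every
   weight, Y is the only matching with positive ProS, so she gets Y; under her
   true utilities Y beats X (and Z) with probability 1/2 + e > 1/2. *)

From HB Require Import structures.
From mathcomp Require Import all_boot all_order all_algebra.
From mathcomp Require Import fingroup perm reals lra.
From Stdlib Require Import FunctionalExtensionality.
Import Order.TTheory GRing.Theory Num.Theory.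
Local Open Scope ring_scope.

Set Implicit Arguments. Unset Strict Implicit. Unset Printing Implicit Defensive.

Section SingleStudent.
Variables (R : realType) (m : nat) (F : finType) (I : instance R 1 m F).

Lemma ProS_single (pi : matching 1 m) :
  ProS I pi = prob_w (mu I ord0) (fun w => stable I pi (fun=> w)).
Proof.
case: I => cp cr ut d; rewrite /ProS /prob_w /=.
have -> : d = fun=> d ord0 by apply: functional_extensionality => s; rewrite (ord1 s).
set J := Instance _ _ _ _.
rewrite (big_nth (0, [ffun=> 0])) big_mkord.
rewrite (reindex (fun i : 'I_(size (d ord0)) => ([ffun=> i] : profile J))) /=; last first.
  exists (fun p : profile J => p ord0) => p _ /=; first by rewrite ffunE.
  by apply/ffunP => s; rewrite ffunE (ord1 s).
apply: eq_bigr => i _; rewrite big_ord1 /atom ffunE /=.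
congr (_ * (stable _ _ _)%:R).
by apply: functional_extensionality => s; rewrite ffunE.
Qed.

Hypothesis cap_gt0 : forall c, (0 < cap I c)%N.

Lemma is_matching_single (pi : matching 1 m) : is_matching I pi.
Proof.
apply/forallP => c; apply: leq_trans (cap_gt0 c).
by rewrite (leq_trans (max_card _)) ?card_ord.
Qed.

Lemma blocking_single (pi : matching 1 m) w s c :
  blocking I pi w s c = spref I s (w s) (Some c) (pi s).
Proof.
rewrite /blocking; case pref: spref => //=.
suff -> : load pi c = 0%N by rewrite cap_gt0.
apply/eqP; rewrite cards_eq0; apply/eqP/setP => t; rewrite !inE (ord1 t) -(ord1 s).
by apply/negbTE; apply: contraTN pref => /eqP ->; rewrite /= ltxx.
Qed.

Lemma stable_single_top (pi : matching 1 m) w c :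
  (forall c', c' != c -> score I ord0 w c' < score I ord0 w c) ->
  stable I pi (fun=> w) = (pi ord0 == Some c).
Proof.
move=> top; apply/forallP/eqP => [/(_ ord0) /forallP /(_ c) | pic s].
  rewrite blocking_single; case: (pi ord0) => [d|] //= /negP.
  by case: (eqVneq d c) => [-> //| /top dc []].
apply/forallP => d; rewrite blocking_single (ord1 s) pic /= -leNgt.
by case: (eqVneq d c) => [-> //| /top /ltW].
Qed.
End SingleStudent.

Lemma ProS_le_MaxProS (R : realType) n m (F : finType) (I : instance R n m F)
    (pi : matching n m) :
  is_matching I pi -> ProS I pi <= MaxProS I.
Proof. exact: le_bigmax_cond. Qed.

Lemma alpha_optimal_ProS (R : realType) (Alg : algorithm R) (alpha : R) n m
    (I : instance R n m 'I_2) (pi : matching n m) :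
  alpha_optimal Alg alpha -> 0 <= alpha -> valid_inst I -> is_matching I pi ->
  alpha * ProS I pi <= ProS I (Alg n m I).
Proof.
move=> opt alpha_ge0 vI mpi; apply: le_trans (opt _ _ _ vI).
by rewrite ler_wpM2l // ProS_le_MaxProS.
Qed.

Lemma sum_two_features (R : realType) (x : 'I_2 -> R) :
  \sum_f x f = x ord0 + x ord_max.
Proof. by rewrite big_ord_recr big_ord1; congr (x _ + _); apply: val_inj. Qed.

Lemma score_two_features (R : realType) n m (I : instance R n m 'I_2) s w c :
  score I s w c = w ord0 * util I s ord0 c + w ord_max * util I s ord_max c.
Proof. exact: (sum_two_features (fun f => w f * util I s f c)). Qed.

Definition cX : 'I_3 := @Ordinal 3 0 isT.
Definition cY : 'I_3 := @Ordinal 3 1 isT.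
Definition cZ : 'I_3 := @Ordinal 3 2 isT.

Lemma forall_I3 (P : 'I_3 -> Prop) : P cX -> P cY -> P cZ -> forall c, P c.
Proof.
move=> PX PY PZ [[|[|[|k]]] lt_c3] //.
- by rewrite (_ : Ordinal _ = cX) //; apply: val_inj.
- by rewrite (_ : Ordinal _ = cY) //; apply: val_inj.
- by rewrite (_ : Ordinal _ = cZ) //; apply: val_inj.
Qed.

Section Counterexample.
Variables (R : realType) (e : R).

Definition w_first : {ffun 'I_2 -> R} := [ffun f => (f == ord0)%:R].
Definition w_second : {ffun 'I_2 -> R} := [ffun f => (f != ord0)%:R].
Definition w_even : {ffun 'I_2 -> R} := [ffun=> 1/2].

Definition weight_dist : dist R 'I_2 :=
  [:: (1/2 - e, w_first); (2 * e, w_even); (1/2 - e, w_second)].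

Definition true_util (f : 'I_2) (c : 'I_3) : R :=
  (if f == ord0 then [:: 1; 3/4; 0] else [:: 0; 3/4; 1])`_c.
Definition fake_util (f : 'I_2) (c : 'I_3) : R := (c == cY)%:R.

Definition true_inst : instance R 1 3 'I_2 :=
  Instance (fun=> 1%N) (fun=> 1%g) (fun=> true_util) (fun=> weight_dist).
Definition fake_inst : instance R 1 3 'I_2 :=
  Instance (fun=> 1%N) (fun=> 1%g) (fun=> fake_util) (fun=> weight_dist).

Lemma misreport_true_inst :
  misreport true_inst ord0 fake_util weight_dist = fake_inst.
Proof. by congr Instance; apply: functional_extensionality => s; rewrite (ord1 s). Qed.

Lemma score_true_first c : score true_inst ord0 w_first c = [:: 1; 3/4; 0]`_c.
Proof. by rewrite score_two_features !ffunE /= mul1r mul0r addr0. Qed.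

Lemma score_true_second c : score true_inst ord0 w_second c = [:: 0; 3/4; 1]`_c.
Proof. by rewrite score_two_features !ffunE /= mul1r mul0r add0r. Qed.

Lemma score_true_even c : score true_inst ord0 w_even c = [:: 1/2; 3/4; 1/2]`_c.
Proof.
rewrite score_two_features !ffunE /= -mulrDr.
by move: c; apply: forall_I3; rewrite /true_util /=; lra.
Qed.

Lemma ProS_true_inst (pi : matching 1 3) :
  ProS true_inst pi = (1/2 - e) * (pi ord0 == Some cX)%:R
    + 2 * e * (pi ord0 == Some cY)%:R + (1/2 - e) * (pi ord0 == Some cZ)%:R.
Proof.
have top_first c : c != cX ->
    score true_inst ord0 w_first c < score true_inst ord0 w_first cX.
  by rewrite !score_true_first; move: c; apply: forall_I3; rewrite ?eqxx //= => _; lra.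
have top_even c : c != cY ->
    score true_inst ord0 w_even c < score true_inst ord0 w_even cY.
  by rewrite !score_true_even; move: c; apply: forall_I3; rewrite ?eqxx //= => _; lra.
have top_second c : c != cZ ->
    score true_inst ord0 w_second c < score true_inst ord0 w_second cZ.
  by rewrite !score_true_second; move: c; apply: forall_I3; rewrite ?eqxx //= => _; lra.
rewrite ProS_single /prob_w !big_cons big_nil /=.
by rewrite !(stable_single_top _ _ top_first, stable_single_top _ _ top_even,
  stable_single_top _ _ top_second) // addr0 addrA.
Qed.

Lemma weight_ok_first : weight_ok w_first.
Proof.
rewrite /weight_ok sum_two_features !ffunE /= addr0 eqxx andbT.
by apply/forallP => f; rewrite ffunE ler0n.
Qed.

Lemma weight_ok_second : weight_ok w_second.
Proof.
rewrite /weight_ok sum_two_features !ffunE /= add0r eqxx andbT.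
by apply/forallP => f; rewrite ffunE ler0n.
Qed.

Lemma weight_ok_even : weight_ok w_even.
Proof.
rewrite /weight_ok sum_two_features !ffunE; apply/andP; split.
  by apply/forallP => f; rewrite ffunE; lra.
by apply/eqP; lra.
Qed.

Lemma ProS_fake_inst (pi : matching 1 3) :
  ProS fake_inst pi = (pi ord0 == Some cY)%:R.
Proof.
have top w : weight_ok w -> forall c, c != cY ->
    score fake_inst ord0 w c < score fake_inst ord0 w cY.
  move=> /andP[_ /eqP sum_w] c /negbTE ncY.
  by rewrite /score -!big_distrl /= sum_w /fake_util ncY !mul1r ltr01.
rewrite ProS_single /prob_w !big_cons big_nil /=.
rewrite !(stable_single_top _ _ (top _ weight_ok_first),
  stable_single_top _ _ (top _ weight_ok_even),
  stable_single_top _ _ (top _ weight_ok_second)) //.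
by rewrite addr0 addrA -!mulrDl -[RHS]mul1r; congr (_ * _); lra.
Qed.

Lemma prob_prefers_cY (o : option 'I_3) : (o == Some cX) || (o == Some cZ) ->
  prob_w weight_dist (fun w => spref true_inst ord0 w (Some cY) o) = 1/2 + e.
Proof.
have [lt1 lt0 lt_half] : [/\ (1 < 3/4 :> R) = false, 0 < 3/4 :> R & 1/2 < 3/4 :> R].
  by split; [apply/negbTE; rewrite -leNgt|..]; lra.
rewrite /prob_w !big_cons big_nil /=.
by case/orP => /eqP -> /=;
  rewrite !(score_true_first, score_true_even, score_true_second) /= lt1 lt0 lt_half /=;
  lra.
Qed.

Hypothesis e_range : 0 <= e <= 1/4.

Lemma weight_dist_ok : dist_ok weight_dist.
Proof.
rewrite /dist_ok /= weight_ok_first weight_ok_even weight_ok_second.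
rewrite !big_cons big_nil /= !andbT; case/andP: e_range => e_ge0 e_le.
have [p_ends p_mid] : 0 <= 1/2 - e /\ 0 <= 2 * e by split; lra.
by rewrite p_ends p_mid /=; apply/eqP; lra.
Qed.

Lemma true_inst_valid : valid_inst true_inst.
Proof.
split=> // [s f c | s]; last exact: weight_dist_ok.
by rewrite /= /true_util; case: ifP => _; move: c; apply: forall_I3 => /=; lra.
Qed.

Lemma fake_inst_valid : valid_inst fake_inst.
Proof.
split=> // [s f c | s]; last exact: weight_dist_ok.
by rewrite /= /fake_util; case: (c == cY); rewrite /= ?lexx ?ler01.
Qed.

Section Optimality.
Variables (Alg : algorithm R) (alpha : R).
Hypotheses (opt : alpha_optimal Alg alpha) (alpha_gt0 : 0 < alpha).

Lemma optimal_on_fake_inst : @Alg 1 3 fake_inst ord0 = Some cY.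
Proof.
have := alpha_optimal_ProS opt (ltW alpha_gt0) fake_inst_valid
  (is_matching_single (I := fake_inst) (fun=> isT) [ffun=> Some cY]).
by rewrite !ProS_fake_inst ffunE eqxx mulr1; case: eqP => // _; rewrite leNgt alpha_gt0.
Qed.

Lemma optimal_on_true_inst : 2 * e < alpha * (1/2 - e) ->
  (@Alg 1 3 true_inst ord0 == Some cX) || (@Alg 1 3 true_inst ord0 == Some cZ).
Proof.
move=> small_e.
have := alpha_optimal_ProS opt (ltW alpha_gt0) true_inst_valid
  (is_matching_single (I := true_inst) (fun=> isT) [ffun=> Some cX]).
rewrite !ProS_true_inst ffunE /=; apply: contraTT.
rewrite negb_or -ltNge => /andP[/negbTE -> /negbTE ->].
by case/andP: e_range => e_ge0 _; case: (_ == _) => /=; lra.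
Qed.
End Optimality.
End Counterexample.

Lemma exists_small_eps (R : realType) (alpha : R) : 0 < alpha ->
  exists e : R, [/\ 0 < e, e <= 1/4 & 2 * e < alpha * (1/2 - e)].
Proof.
move=> alpha_gt0; set m := Num.min alpha 1; exists (m / 8).
have [m_gt0 m_le1 m_le_alpha] : [/\ 0 < m, m <= 1 & m <= alpha].
  by rewrite /m lt_min ge_min lexx ge_min lexx orbT alpha_gt0 ltr01.
by split; nra.
Qed.

Theorem theorem2 (R : realType) (Alg : algorithm R) :
  outputs_matchings Alg -> IC_R Alg ->
  ~ (exists alpha : R, 0 < alpha /\ alpha_optimal Alg alpha).
Proof.
move=> _ ic [alpha [alpha_gt0 opt]].
have [e [e_gt0 e_le small_e]] := exists_small_eps alpha_gt0.
have e_range : 0 <= e <= 1/4 by rewrite (ltW e_gt0) e_le.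
apply: (ic 1%N 3%N (true_inst e) ord0 (@fake_util R) (weight_dist e)).
- exact: true_inst_valid.
- by rewrite misreport_true_inst; exact: fake_inst_valid.
rewrite misreport_true_inst (optimal_on_fake_inst e_range opt alpha_gt0).
by rewrite prob_prefers_cY ?(optimal_on_true_inst e_range opt alpha_gt0 small_e); lra.
Qed.
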